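(* Consider the procedures $\mathrm{Solve}_\mathsf{E}$ and $\mathrm{Solve}_\mathsf{O}$ defined in the context (Algorithm 2). Let $G$ be a subgame, $p_\mathsf{E},p_\mathsf{O}$ positive integers, and $d$ a nonnegative integer not smaller than the maximal priority in $G$. If $d$ is even, the set returned by $\mathrm{Solve}_\mathsf{E}(G,d,p_\mathsf{E},p_\mathsf{O})$ (i) contains every dominion of Even in $G$ of size at most $p_\mathsf{E}$, and (ii) is disjoint from every dominion of Odd in $G$ of size at most $p_\mathsf{O}$. If $d$ is odd, the set returned by $\mathrm{Solve}_\mathsf{O}(G,d,p_\mathsf{O},p_\mathsf{E})$ (i) contains every dominion of Odd in $G$ of size at most $p_\mathsf{O}$, and (ii) is disjoint from every dominion of Even in $G$ of size at most $p_\mathsf{E}$. (In particular, all loops in the procedures terminate.)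
   Context: A parity game is $\mathcal{G}=(V,V_\mathsf{E},E,\pi)$: $(V,E)$ a finite directed graph without self-loops, every vertex having a successor; $\pi\colon V\to\{1,\dots,d\}$ positive priorities; $V_\mathsf{E}$ Even's vertices, $V_\mathsf{O}=V\setminus V_\mathsf{E}$ Odd's vertices. A play is won by Even iff the highest priority seen infinitely often is even, else by Odd. A subgame is given by $G\subseteq V$ in which every vertex has a successor in $G$. A dominion of player $\wp$ in $G$ is $D\subseteq G$ such that from every $v\in D$, $\wp$ has a winning strategy in $G$ agreeing only with plays staying forever in $D$. $\mathrm{Attr}_\wp(S,G)$ is the set of vertices from which $\wp$ has a strategy in $G$ agreeing only with plays reaching $S$. Algorithm 2. $\mathrm{Solve}_\mathsf{E}(G,d,p_\mathsf{E},p_\mathsf{O})$ (for even $d$): if $G=\emptyset$ or $p_\mathsf{E}\le 1$, return $\emptyset$. Otherwise: repeat $\{N_d:=\{v\in G:\pi(v)=d\}$; $H:=G\setminus\mathrm{Attr}_\mathsf{E}(N_d,G)$; $W_\mathsf{O}:=\mathrm{Solve}_\mathsf{O}(H,d-1,\lfloor p_\mathsf{O}/2\rfloor,p_\mathsf{E})$; $G:=G\setminus\mathrm{Attr}_\mathsf{O}(W_\mathsf{O},G)\}$ until $W_\mathsf{O}=\emptyset$. Then (with $H$ from the last repeat iteration) $W_\mathsf{O}:=\mathrm{Solve}_\mathsf{O}(H,d-1,p_\mathsf{O},p_\mathsf{E})$; $G:=G\setminus\mathrm{Attr}_\mathsf{O}(W_\mathsf{O},G)$. Then while $W_\mathsf{O}\ne\emptyset$: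 $\{N_d:=\{v\in G:\pi(v)=d\}$; $H:=G\setminus\mathrm{Attr}_\mathsf{E}(N_d,G)$; $W_\mathsf{O}:=\mathrm{Solve}_\mathsf{O}(H,d-1,\lfloor p_\mathsf{O}/2\rfloor,p_\mathsf{E})$; $G:=G\setminus\mathrm{Attr}_\mathsf{O}(W_\mathsf{O},G)\}$. Return $G$. $\mathrm{Solve}_\mathsf{O}(G,d,p_\mathsf{O},p_\mathsf{E})$ (for odd $d$) is the dual, obtained by swapping the roles of Even and Odd: it returns $\emptyset$ if $G=\emptyset$ or $p_\mathsf{O}\le 1$; otherwise it uses $H:=G\setminus\mathrm{Attr}_\mathsf{O}(N_d,G)$, $W_\mathsf{E}:=\mathrm{Solve}_\mathsf{E}(H,d-1,\lfloor p_\mathsf{E}/2\rfloor,p_\mathsf{O})$ in both loops, $W_\mathsf{E}:=\mathrm{Solve}_\mathsf{E}(H,d-1,p_\mathsf{E},p_\mathsf{O})$ in the middle step, and updates $G:=G\setminus\mathrm{Attr}_\mathsf{E}(W_\mathsf{E},G)$. *)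

From mathcomp Require Import all_boot.
Set Implicit Arguments. Unset Strict Implicit. Unset Printing Implicit Defensive.

Inductive player := Even | Odd.

Definition opp (p : player) : player := match p with Even => Odd | Odd => Even end.
Definition is_odd_player (p : player) : bool := match p with Even => false | Odd => true end.
(* The player "matching" the parity of d: Solve_E for even d, Solve_O for odd d. *)
Definition player_of_parity (d : nat) : player := if odd d then Odd else Even.

Section ParityGames.
Variables (V : finType) (E : rel V) (VE : {set V}) (pi : V -> nat).

Definition owner (v : V) : player := if v \in VE then Even else Odd.

(* A (history-dependent) strategy: maps the finite history (last element =
   current vertex) to the chosen successor. *)
Definition strategy := seq V -> V.

Definition valid_strategy (p : player) (G : {set V}) (s : strategy) : Prop :=
  forall (h : seq V) (v : V), v \in G -> owner v = p ->
    s (rcons h v) \in G /\ E v (s (rcons h v)).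

Definition play_in (G : {set V}) (v : V) (r : nat -> V) : Prop :=
  r 0 = v /\ forall i, r i \in G /\ E (r i) (r i.+1).

Definition consistent (p : player) (s : strategy) (r : nat -> V) : Prop :=
  forall i, owner (r i) = p -> r i.+1 = s (mkseq r i.+1).

Definition wins (p : player) (r : nat -> V) : Prop :=
  exists q, odd q = is_odd_player p /\
    (forall n, exists m, n <= m /\ pi (r m) = q) /\
    (exists n, forall m, n <= m -> pi (r m) <= q).

Definition subgame (G : {set V}) : Prop :=
  forall v, v \in G -> exists w, w \in G /\ E v w.

Definition dominion (p : player) (G D : {set V}) : Prop :=
  D \subset G /\
  forall v, v \in D -> exists s, valid_strategy p G s /\
    forall r, play_in G v r -> consistent p s r ->
      (forall i, r i \in D) /\ wins p r.

Definition attr (p : player) (S G : {set V}) (v : V) : Prop :=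
  v \in G /\ exists s, valid_strategy p G s /\
    forall r, play_in G v r -> consistent p s r -> exists i, r i \in S.

Definition remove_attr (p : player) (S G G' : {set V}) : Prop :=
  forall v, v \in G' <-> (v \in G /\ ~ attr p S G v).

Definition top_prio (G : {set V}) (d : nat) : {set V} := [set v in G | pi v == d].

(* Big-step semantics of Algorithm 2.  solveR d G pm po R means: the procedure
   of the player me := player_of_parity d (Solve_E if d even, Solve_O if d
   odd), called with own bound pm and opponent bound po, terminates and
   returns R.  That is:
     Solve_E(G,d,pE,pO) = R  <->  solveR d G pE pO R   (d even)
     Solve_O(G,d,pO,pE) = R  <->  solveR d G pO pE R   (d odd)
   repeatR d G pm po Gf Hf : the "repeat ... until W = empty" loop started on
   G terminates with current game Gf and last H equal to Hf.
   whileR d W G pm po Gf : the final "while W <> empty" loop started on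
   (W, G) terminates with game Gf. *)
Inductive solveR : nat -> {set V} -> nat -> nat -> {set V} -> Prop :=
| solve_triv d G pm po :
    (G = set0 \/ pm <= 1) -> solveR d G pm po set0
| solve_step d G pm po Gl Hl W G2 Gf :
    G != set0 -> 1 < pm ->
    repeatR d.+1 G pm po Gl Hl ->
    solveR d Hl po pm W ->
    remove_attr (opp (player_of_parity d.+1)) W Gl G2 ->
    whileR d.+1 W G2 pm po Gf ->
    solveR d.+1 G pm po Gf
with repeatR : nat -> {set V} -> nat -> nat -> {set V} -> {set V} -> Prop :=
| repeat_stop d G pm po H W G' :
    remove_attr (player_of_parity d) (top_prio G d) G H ->
    solveR d.-1 H (po %/ 2) pm W ->
    remove_attr (opp (player_of_parity d)) W G G' ->
    W = set0 ->
    repeatR d G pm po G' H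
| repeat_go d G pm po H W G' Gf Hf :
    remove_attr (player_of_parity d) (top_prio G d) G H ->
    solveR d.-1 H (po %/ 2) pm W ->
    remove_attr (opp (player_of_parity d)) W G G' ->
    W != set0 ->
    repeatR d G' pm po Gf Hf ->
    repeatR d G pm po Gf Hf
with whileR : nat -> {set V} -> {set V} -> nat -> nat -> {set V} -> Prop :=
| while_stop d W G pm po :
    W = set0 -> whileR d W G pm po G
| while_go d W G pm po Gf Hf :
    W != set0 -> repeatR d G pm po Gf Hf -> whileR d W G pm po Gf.

End ParityGames.

From HB Require Import structures.
From mathcomp Require Import all_boot.
From Stdlib Require Import Classical_Prop.
From mathcomp Require Import zify.
Set Implicit Arguments. Unset Strict Implicit. Unset Printing Implicit Defensive.

Definition player_eqb (a b : player) : bool :=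
  match a, b with Even, Even | Odd, Odd => true | _, _ => false end.

Lemma player_eqP : Equality.axiom player_eqb.
Proof. by case; case; constructor. Qed.

HB.instance Definition _ := hasDecEq.Build player player_eqP.

Lemma oppK : involutive opp.
Proof. by case. Qed.

Lemma player_cases q p : q = p \/ q = opp p.
Proof. by case: q; case: p; auto. Qed.

Lemma player_of_parityS d : player_of_parity d = opp (player_of_parity d.+1).
Proof. by rewrite /player_of_parity /=; case: (odd d). Qed.

Lemma disjoint_intro (T : finType) (A B : {set T}) :
  (forall x, x \in A -> x \in B -> False) -> [disjoint A & B].
Proof.
move=> H; rewrite -setI_eq0; apply/eqP/setP => x; rewrite !inE.
by apply/negP => /andP[xA xB]; exact: H x xA xB.
Qed.

Lemma disjoint_setIl (T : finType) (D Y R : {set T}) : R \subset Y ->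
  [disjoint D :&: Y & R] -> [disjoint D & R].
Proof.
move=> /subsetP RY dis; apply: disjoint_intro => x xD xR.
have xDY : x \in D :&: Y by rewrite inE xD RY.
by rewrite (disjointFr dis xDY) in xR.
Qed.

Lemma half_bound (a b po : nat) : a <= po -> po %/ 2 < b -> a - b <= po %/ 2.
Proof. by move=> apo hb; have := divn_eq po 2; have := ltn_pmod po (isT : 0 < 2); lia. Qed.

Section ParityGameTheory.
Variables (V : finType) (E : rel V) (VE : {set V}) (pi : V -> nat).

Local Notation own := (owner VE).

Lemma owner_cases u p : own u = p \/ own u = opp p.
Proof. exact: player_cases. Qed.

Lemma owner_opp u p : own u = opp p -> (own u == p) = false.
Proof. by move=> ->; case: p. Qed.

(* Some successor of u inside X (u itself if there is none); it completes
   strategies that are only relevant on part of the arena. *)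
Definition succ_in (X : {set V}) (u : V) : V := odflt u [pick w | (w \in X) && E u w].

Lemma succ_inP X u : subgame E X -> u \in X -> succ_in X u \in X /\ E u (succ_in X u).
Proof.
move=> HX /HX [w [wX uw]]; rewrite /succ_in; case: pickP => [x /andP[]//|/(_ w)].
by rewrite wX uw.
Qed.

Definition attr_step (p : player) (S X A : {set V}) : {set V} :=
  [set u in X | (u \in S) ||
     (if own u == p then [exists w, [&& w \in X, E u w & w \in A]]
      else [forall w, ((w \in X) && E u w) ==> (w \in A)])].

Lemma attr_step_mono p (S X : {set V}) : {homo attr_step p S X : A B / A \subset B}.
Proof.
move=> A B /subsetP AB; apply/subsetP => u; rewrite !inE => /andP[-> /orP[->//|H]].
apply/orP; right; case: ifP H => _.
  by move=> /existsP[w /and3P[wX uw wA]]; apply/existsP; exists w; rewrite wX uw AB.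
by move=> /forallP H; apply/forallP => w; apply/implyP => /(implyP (H w)) /AB.
Qed.

Definition attractor p S X := fixset (attr_step p S X).
Definition attr_rank p S X u := fix_order (attr_step p S X) u.

Lemma attractor_fix p (S X : {set V}) : attr_step p S X (attractor p S X) = attractor p S X.
Proof. exact: fixsetK (attr_step_mono p S X). Qed.

Lemma attractor_sub p (S X : {set V}) : attractor p S X \subset X.
Proof. by rewrite -attractor_fix; apply/subsetP => u; rewrite inE => /andP[]. Qed.

Lemma attractor_in p (S X : {set V}) u : u \in attractor p S X -> u \in X.
Proof. exact: (subsetP (attractor_sub p S X)). Qed.

Lemma attractor_base p (S X : {set V}) u : u \in X -> u \in S -> u \in attractor p S X.
Proof. by move=> uX uS; rewrite -attractor_fix inE uX uS. Qed.

Lemma attractor_own p (S X : {set V}) u w : u \in X -> own u = p -> w \in X -> E u w ->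
  w \in attractor p S X -> u \in attractor p S X.
Proof.
move=> uX up wX uw wA; rewrite -attractor_fix inE uX up eqxx /=; apply/orP; right.
by apply/existsP; exists w; rewrite wX uw wA.
Qed.

Lemma attractor_opp p (S X : {set V}) u : u \in X -> own u = opp p ->
  (forall w, w \in X -> E u w -> w \in attractor p S X) -> u \in attractor p S X.
Proof.
move=> uX uq H; rewrite -attractor_fix inE uX (owner_opp uq) /=; apply/orP; right.
by apply/forallP => w; apply/implyP => /andP[wX uw]; apply: H.
Qed.

Lemma attr_rank_gt0 p (S X : {set V}) u : u \in attractor p S X -> 0 < attr_rank p S X u.
Proof. by rewrite /attr_rank fix_order_gt0. Qed.

Lemma attractor_descent p (S X : {set V}) u : u \in attractor p S X -> u \notin S ->
  (own u = p -> exists w, [/\ w \in X, E u w, w \in attractor p S X &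
                             attr_rank p S X w < attr_rank p S X u]) /\
  (own u = opp p -> forall w, w \in X -> E u w ->
                     w \in attractor p S X /\ attr_rank p S X w < attr_rank p S X u).
Proof.
move=> uA uS; have := attr_rank_gt0 uA; have := uA.
rewrite -(in_iter_fix_orderE (attr_step p S X)) /attr_rank.
case: (fix_order _ u) => [//|m] /= Hm _.
have Hi := iter_sub_fix (attr_step_mono p S X) m.
have Hs w : w \in iter m (attr_step p S X) set0 -> fix_order (attr_step p S X) w < m.+1.
  by move=> Hw; rewrite ltnS; apply: fix_order_small (attr_step_mono p S X) _ _ Hw.
move: Hm; rewrite inE (negPf uS) /= => /andP[uX H]; split.
  move=> up; move: H; rewrite up eqxx => /existsP[w /and3P[wX uw wm]].
  by exists w; split => //; [apply: (subsetP Hi)|apply: Hs].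
move=> uq; move: H; rewrite (owner_opp uq) => /forallP H w wX uw.
have wm := implyP (H w) (introT andP (conj wX uw)).
by split; [apply: (subsetP Hi)|apply: Hs].
Qed.

Definition attr_move p S X u := odflt (succ_in X u)
  [pick w | [&& w \in X, E u w, w \in attractor p S X & attr_rank p S X w < attr_rank p S X u]].

Lemma attr_moveP p (S X : {set V}) u : subgame E X -> u \in X ->
  attr_move p S X u \in X /\ E u (attr_move p S X u).
Proof.
move=> HX uX; rewrite /attr_move; case: pickP => [w /and4P[]//|_]; exact: succ_inP.
Qed.

Lemma attr_move_descent p (S X : {set V}) u : u \in attractor p S X -> u \notin S -> own u = p ->
  [/\ attr_move p S X u \in X, E u (attr_move p S X u), attr_move p S X u \in attractor p S X &
      attr_rank p S X (attr_move p S X u) < attr_rank p S X u].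
Proof.
move=> uA uS up; have [/(_ up) [w [wX uw wA wr]] _] := attractor_descent uA uS.
by rewrite /attr_move; case: pickP => [x /and4P[]//|/(_ w)]; rewrite wX uw wA wr.
Qed.

Definition path_in (X : {set V}) (r : nat -> V) := forall i, r i \in X /\ E (r i) (r i.+1).

Lemma attractor_reach p (S X : {set V}) r i : path_in X r ->
  (forall j, r j \in attractor p S X -> r j \notin S -> own (r j) = p ->
     r j.+1 = attr_move p S X (r j)) ->
  r i \in attractor p S X -> exists j, i <= j /\ r j \in S.
Proof.
move=> rX rp; move Hn: (attr_rank p S X (r i)) => n; move: (leqnn n); rewrite -{1}Hn.
elim: n i {Hn} => [|n IH] i Hn riA.
  by move: (attr_rank_gt0 riA); rewrite leqn0 in Hn; rewrite (eqP Hn).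
case riS: (r i \in S); first by exists i.
have riS' : r i \notin S by rewrite riS.
have [nextA nextr] : r i.+1 \in attractor p S X /\
                     attr_rank p S X (r i.+1) < attr_rank p S X (r i).
  have [_ ri_edge] := rX i; have [ri1X _] := rX i.+1.
  case: (owner_cases (r i) p) => Ho.
    by rewrite (rp _ riA riS' Ho); have [] := attr_move_descent riA riS' Ho.
  by have [_ /(_ Ho _ ri1X ri_edge)] := attractor_descent riA riS'.
have [j [ij rjS]] := IH i.+1 (leq_trans nextr Hn) nextA.
by exists j; split => //; apply: ltnW.
Qed.

Lemma attr_compl_subgame p (S X : {set V}) : subgame E X -> subgame E (X :\: attractor p S X).
Proof.
move=> HX u; rewrite inE => /andP[uA uX]; case: (owner_cases u p) => Ho.
  have [w [wX uw]] := HX u uX; exists w; rewrite inE wX andbT; split=> //.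
  by apply: contraNN uA; apply: attractor_own.
apply: NNPP => Hn; move/negP: uA; apply; apply: attractor_opp => // w wX uw.
by apply: NNPP => wA; apply: Hn; exists w; rewrite inE wX andbT; split => //; apply/negP.
Qed.

Lemma attr_compl_trap p (S X : {set V}) u w : u \in X :\: attractor p S X -> own u = p ->
  w \in X -> E u w -> w \in X :\: attractor p S X.
Proof.
rewrite !inE => /andP[uA uX] up wX uw; rewrite wX andbT.
by apply: contraNN uA; apply: attractor_own.
Qed.

Definition merge p (t1 t2 : V -> V) u := if own u == p then t1 u else t2 u.

Lemma merged_path p (t1 t2 : V -> V) (X : {set V}) u :
  (forall y, y \in X -> own y = p -> t1 y \in X /\ E y (t1 y)) ->
  (forall y, y \in X -> own y = opp p -> t2 y \in X /\ E y (t2 y)) -> u \in X ->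
  exists r, [/\ r 0 = u, path_in X r, (forall i, own (r i) = p -> r i.+1 = t1 (r i)) &
    (forall i, own (r i) = opp p -> r i.+1 = t2 (r i))].
Proof.
move=> H1 H2 uX; pose r i := iter i (merge p t1 t2) u.
have r1 y : own y = p -> merge p t1 t2 y = t1 y by move=> yp; rewrite /merge yp eqxx.
have r2 y : own y = opp p -> merge p t1 t2 y = t2 y by move=> yq; rewrite /merge (owner_opp yq).
have step i : r i \in X -> r i.+1 \in X /\ E (r i) (r i.+1).
  move=> riX; rewrite /r iterS; case: (owner_cases (r i) p) => Ho.
    by rewrite r1 //; apply: H1.
  by rewrite r2 //; apply: H2.
have rX i : r i \in X by elim: i => [//|i IH]; case: (step i IH).
exists r; split => //.
- by move=> i; split => //; case: (step i (rX i)).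
- by move=> i Ho; rewrite /r iterS r1.
- by move=> i Ho; rewrite /r iterS r2.
Qed.

Definition positional (x0 : V) (t : V -> V) : strategy V := fun h => t (last x0 h).

Lemma last_mkseq x0 (r : nat -> V) i : last x0 (mkseq r i.+1) = r i.
Proof. by rewrite mkseqS last_rcons. Qed.

Lemma positional_valid p (X : {set V}) x0 t :
  (forall y, y \in X -> own y = p -> t y \in X /\ E y (t y)) ->
  valid_strategy E VE p X (positional x0 t).
Proof. by move=> H h v vX vp; rewrite /positional last_rcons; apply: H. Qed.

Lemma positional_consistent p x0 t r :
  consistent VE p (positional x0 t) r <-> forall i, own (r i) = p -> r i.+1 = t (r i).
Proof. by rewrite /consistent /positional; split=> H i; move: (H i); rewrite last_mkseq. Qed.

Lemma play_exists p (s1 s2 : strategy V) (X : {set V}) v : valid_strategy E VE p X s1 ->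
  valid_strategy E VE (opp p) X s2 -> v \in X ->
  exists r, [/\ play_in E X v r, consistent VE p s1 r & consistent VE (opp p) s2 r].
Proof.
move=> H1 H2 vX.
pose nxt (h : seq V) := if own (last v h) == p then s1 h else s2 h.
pose fix hist n := if n is n'.+1 then rcons (hist n') (nxt (hist n')) else [:: v].
pose r i := last v (hist i).
have hist_mkseq i : hist i = mkseq r i.+1.
  by elim: i => [//|i IH]; rewrite mkseqS -IH /r /= last_rcons.
have rS i : r i.+1 = if own (r i) == p then s1 (mkseq r i.+1) else s2 (mkseq r i.+1).
  by rewrite -hist_mkseq /r /= last_rcons /nxt -/(r i) /r.
have step i : r i \in X -> r i.+1 \in X /\ E (r i) (r i.+1).
  move=> riX; rewrite rS mkseqS; case: (owner_cases (r i) p) => Ho.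
    by rewrite Ho eqxx; apply: H1.
  by rewrite (owner_opp Ho); apply: H2.
have rX i : r i \in X by elim: i => [//|i IH]; case: (step i IH).
exists r; split.
- split; first by [].
  by move=> i; split => //; case: (step i (rX i)).
- by move=> i Ho; rewrite rS Ho eqxx.
- by move=> i Ho; rewrite rS (owner_opp Ho).
Qed.

(* The fixpoint attractor coincides with the strategy-based attr: from a vertex
   outside it, the opponent can stay outside forever, so S is never reached. *)
Lemma attrE p (S X : {set V}) v : subgame E X -> attr E VE p S X v <-> v \in attractor p S X.
Proof.
move=> HX; split; last first.
  move=> vA; split; first exact: attractor_in vA.
  exists (positional v (attr_move p S X)); split.
    by apply: positional_valid => y yX _; apply: attr_moveP.
  move=> r [r0 rX] /positional_consistent rp.
  have r0A : r 0 \in attractor p S X by rewrite r0.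
  by have [j [_ rjS]] := attractor_reach rX (fun j _ _ Ho => rp j Ho) r0A; exists j.
move=> [vX [s [Hs Hreach]]]; apply: NNPP => vA.
(* the opponent stays outside the attractor *)
pose t u := odflt (succ_in X u) [pick w | [&& w \in X, E u w & w \notin attractor p S X]].
have Ht y : y \in X -> own y = opp p -> t y \in X /\ E y (t y).
  by move=> yX _; rewrite /t; case: pickP => [w /and3P[]//|_]; apply: succ_inP.
have [r [Hr Hc1 /positional_consistent Hc2]] := play_exists Hs (positional_valid v Ht) vX.
have [r0 rX] := Hr.
have rA i : r i \notin attractor p S X.
  elim: i => [|i IH]; first by rewrite r0; apply/negP.
  have [riX ri_edge] := rX i; have [ri1X _] := rX i.+1.
  case: (owner_cases (r i) p) => Ho; first by apply: contraNN IH; apply: attractor_own.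
  have riY : r i \in X :\: attractor p S X by rewrite inE IH.
  have [w [wY rw]] := attr_compl_subgame (p := p) (S := S) HX riY.
  rewrite Hc2 // /t; case: pickP => [x /and3P[]//|/(_ w)].
  by move: wY; rewrite inE => /andP[-> ->]; rewrite rw.
have [i riS] := Hreach r Hr Hc1; apply: (negP (rA i)); apply: attractor_base => //.
by have [] := rX i.
Qed.

Lemma remove_attrE p (S X Y : {set V}) : subgame E X ->
  remove_attr E VE p S X Y -> Y = X :\: attractor p S X.
Proof.
move=> HX HY; apply/setP => u; rewrite inE; apply/idP/idP.
  by move=> /HY [uX uA]; rewrite uX andbT; apply/negP => /(attrE _ _ _ HX).
by move=> /andP[uA uX]; apply/HY; split=> // /(attrE _ _ _ HX); exact/negP.
Qed.

Lemma remove_attr_compl p (S X : {set V}) : subgame E X ->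
  remove_attr E VE p S X (X :\: attractor p S X).
Proof.
move=> HX u; rewrite inE; split.
  by move=> /andP[uA uX]; split=> // /(attrE _ _ _ HX); apply/negP.
by move=> [uX uA]; rewrite uX andbT; apply/negP => /(attrE _ _ _ HX).
Qed.

Lemma attractor0 p (X : {set V}) : subgame E X -> attractor p set0 X = set0.
Proof.
move=> HX; have step0 : attr_step p set0 X set0 = set0.
  apply/setP => u; rewrite !inE; case: (boolP (u \in X)) => //= uX.
  have [w [wX uw]] := HX u uX; case: ifP => _.
    by apply/existsP => -[y]; rewrite inE !andbF.
  by apply/forallP => /(_ w); rewrite wX uw inE.
by rewrite /attractor /fixset; elim: #|_| => //= n ->.
Qed.

Lemma wins_unique p r : wins pi p r -> wins pi (opp p) r -> False.
Proof.
move=> [q1 [o1 [often1 [n1 max1]]]] [q2 [o2 [often2 [n2 max2]]]].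
have [m1 [h1 h1']] := often1 n2; have [m2 [h2 h2']] := often2 n1.
have := max2 _ h1; have := max1 _ h2; rewrite h1' h2' => le21 le12.
have q12 : q1 = q2 by apply/eqP; rewrite eqn_leq le12 le21.
by move: o1 o2; rewrite q12 => ->; case: p.
Qed.

Lemma wins_shift p r t : wins pi p (fun i => r (i + t)) -> wins pi p r.
Proof.
move=> [q [oq [often [n maxq]]]]; exists q; split=> //; split.
  move=> m; have [k [mk rk]] := often m; exists (k + t); split => //.
  exact: leq_trans mk (leq_addr _ _).
exists (n + t) => m nm; have tm : t <= m by apply: leq_trans (leq_addl _ _) nm.
by have := maxq (m - t); rewrite subnK //; apply; rewrite leq_subRL // addnC.
Qed.

Lemma wins_top k r : (forall i, pi (r i) <= k) ->
  (forall n, exists m, n <= m /\ pi (r m) = k) -> wins pi (player_of_parity k) r.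
Proof.
move=> Hk often; exists k; split; first by rewrite /player_of_parity; case: (odd k).
by split=> //; exists 0 => m _.
Qed.

Lemma often_or_finally_never (P : nat -> Prop) :
  (forall n, exists m, n <= m /\ P m) \/ (exists n, forall m, n <= m -> ~ P m).
Proof.
case: (classic (forall n, exists m, n <= m /\ P m)) => H; first by left.
right; apply: NNPP => H'; apply: H => n; apply: NNPP => Hn; apply: H'.
by exists n => m nm Pm; apply: Hn; exists m.
Qed.

Definition pos_dominion p (X D : {set V}) (s : V -> V) := [/\ D \subset X,
  (forall u, u \in D -> own u = p -> s u \in D /\ E u (s u)),
  (forall u w, u \in D -> own u = opp p -> w \in X -> E u w -> w \in D) &
  (forall r, path_in D r -> (forall i, own (r i) = p -> r i.+1 = s (r i)) -> wins pi p r)].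

Lemma pos_dominion0 p (X : {set V}) s : pos_dominion p X set0 s.
Proof.
split; first exact: sub0set.
- by move=> u; rewrite inE.
- by move=> u w; rewrite inE.
- by move=> r /(_ 0) []; rewrite inE.
Qed.

Lemma pos_dominion_play p (X D : {set V}) s r : pos_dominion p X D s -> path_in X r ->
  r 0 \in D -> (forall i, r i \in D -> own (r i) = p -> r i.+1 = s (r i)) ->
  (forall i, r i \in D) /\ wins pi p r.
Proof.
move=> [_ Hmove Hclosed Hwin] rX r0D rs.
have rD i : r i \in D.
  elim: i => [//|i IH]; have [riX ri_edge] := rX i; have [ri1X _] := rX i.+1.
  case: (owner_cases (r i) p) => Ho; first by rewrite (rs _ IH Ho); case: (Hmove _ IH Ho).
  exact: Hclosed IH Ho ri1X ri_edge.
split=> //; apply: Hwin => [i|i Ho]; last exact: rs.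
by split=> //; case: (rX i).
Qed.

Lemma pos_dominion_restrict p (X Y D : {set V}) s : pos_dominion p X D s ->
  D \subset Y -> Y \subset X -> pos_dominion p Y D s.
Proof.
move=> [_ Hmove Hclosed Hwin] DY /subsetP YX; split=> // u w uD uo wY.
exact: Hclosed uD uo (YX _ wY).
Qed.

Lemma pos_dominion_trap p (X Y D : {set V}) s : pos_dominion p X D s -> Y \subset X ->
  (forall u, u \in Y -> own u = p -> forall w, w \in X -> E u w -> w \in Y) ->
  pos_dominion p Y (D :&: Y) s.
Proof.
move=> [/subsetP DX Hmove Hclosed Hwin] /subsetP YX Ytrap; split.
- exact: subsetIr.
- move=> u; rewrite inE => /andP[uD uY] up; have [suD e] := Hmove _ uD up.
  by rewrite inE suD (Ytrap _ uY up _ (DX _ suD) e).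
- move=> u w; rewrite !inE => /andP[uD _] uo wY uw; rewrite wY andbT.
  exact: Hclosed uD uo (YX _ wY) uw.
- move=> r rDY rs; apply: Hwin => // i; have [] := rDY i.
  by rewrite inE => /andP[].
Qed.

Lemma pos_dominion_lift p (X Y D : {set V}) s : pos_dominion p Y D s -> Y \subset X ->
  (forall u, u \in Y -> own u = opp p -> forall w, w \in X -> E u w -> w \in Y) ->
  pos_dominion p X D s.
Proof.
move=> [/subsetP DY Hmove Hclosed Hwin] YX Ytrap; split=> //.
  by apply/subsetP => u /DY /(subsetP YX).
by move=> u w uD uo wX uw; exact: Hclosed uD uo (Ytrap u (DY _ uD) uo w wX uw) uw.
Qed.

Lemma pos_dominion_succ p (X D : {set V}) s u : subgame E X -> pos_dominion p X D s ->
  u \in D -> exists w, w \in D /\ E u w.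
Proof.
move=> HX [/subsetP DX Hmove Hclosed _] uD; case: (owner_cases u p) => Ho.
  by exists (s u); case: (Hmove _ uD Ho).
by have [w [wX uw]] := HX u (DX _ uD); exists w; split=> //; exact: Hclosed uD Ho wX uw.
Qed.

Definition extend (D X : {set V}) (s : V -> V) y := if y \in D then s y else succ_in X y.

Lemma extendP p (X D : {set V}) s y : subgame E X -> D \subset X ->
  (forall u, u \in D -> own u = p -> s u \in D /\ E u (s u)) ->
  y \in X -> own y = p -> extend D X s y \in X /\ E y (extend D X s y).
Proof.
move=> HX /subsetP DX Hmove yX yp; rewrite /extend; case: ifP => yD.
  by have [/DX] := Hmove _ yD yp.
exact: succ_inP.
Qed.

Lemma pos_dominion_disjoint p (X D1 D2 : {set V}) s1 s2 : subgame E X ->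
  pos_dominion p X D1 s1 -> pos_dominion (opp p) X D2 s2 -> [disjoint D1 & D2].
Proof.
move=> HX Hd1 Hd2; have [D1X Hmove1 _ _] := Hd1; have [D2X Hmove2 _ _] := Hd2.
apply: disjoint_intro => u uD1 uD2.
have [r [r0 rX r1 r2]] := merged_path (fun y => extendP HX D1X Hmove1 (y := y))
  (fun y => extendP HX D2X Hmove2 (y := y)) (subsetP D1X _ uD1).
have [_ win1] : (forall i, r i \in D1) /\ wins pi p r.
  by apply: pos_dominion_play Hd1 rX _ _ => [|i ri Ho]; rewrite ?r0 ?r1 // /extend ri.
have [_ win2] : (forall i, r i \in D2) /\ wins pi (opp p) r.
  by apply: pos_dominion_play Hd2 rX _ _ => [|i ri Ho]; rewrite ?r0 ?r2 // /extend ri.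
exact: wins_unique win1 win2.
Qed.

(* A dominion of q that avoids S also avoids the opponent's attractor to S:
   otherwise the opponent could force a play out of the dominion. *)
Lemma pos_dominion_avoids_attr q (X D S : {set V}) s : subgame E X ->
  pos_dominion q X D s -> [disjoint D & S] -> [disjoint D & attractor (opp q) S X].
Proof.
move=> HX Hd DS; have [DX Hmove _ _] := Hd.
apply: disjoint_intro => u uD uA.
have attract y : y \in X -> own y = opp q ->
    attr_move (opp q) S X y \in X /\ E y (attr_move (opp q) S X y).
  by move=> yX _; apply: attr_moveP.
have [r [r0 rX rq ropp]] :=
  merged_path (fun y => extendP HX DX Hmove (y := y)) attract (subsetP DX _ uD).
have [rD _] : (forall i, r i \in D) /\ wins pi q r.
  by apply: pos_dominion_play Hd rX _ _ => [|i ri Ho]; rewrite ?r0 ?rq // /extend ri.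
have r0A : r 0 \in attractor (opp q) S X by rewrite r0.
have [j [_ rjS]] := attractor_reach rX (fun j _ _ Ho => ropp j Ho) r0A.
by move: (rD j); rewrite (disjointFr DS (rD j)) in rjS.
Qed.

(* A dominion extends to its own attractor: attract, then play inside. *)
Lemma pos_dominion_attr q (X D : {set V}) s : subgame E X -> pos_dominion q X D s ->
  pos_dominion q X (attractor q D X)
    (fun u => if u \in D then s u else attr_move q D X u).
Proof.
move=> HX Hd; have [/subsetP DX Hmove Hclosed _] := Hd.
have DA u : u \in D -> u \in attractor q D X by move=> uD; exact: attractor_base (DX _ uD) uD.
split.
- exact: attractor_sub.
- move=> u uA uq; case: ifP => uD.
    by have [suD e] := Hmove _ uD uq; split => //; apply: DA.
  by have [] := attr_move_descent uA (negbT uD) uq.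
- move=> u w uA uo wX uw; case: (boolP (u \in D)) => uD.
    exact: DA (Hclosed _ _ uD uo wX uw).
  by have [_ /(_ uo w wX uw) []] := attractor_descent uA uD.
- move=> r rA rt.
  have rX : path_in X r by move=> i; have [/attractor_in riX e] := rA i.
  have attract j : r j \notin D -> own (r j) = q -> r j.+1 = attr_move q D X (r j).
    by move=> rjD Ho; rewrite rt // (negPf rjD).
  have [j [_ rjD]] := attractor_reach rX (fun j _ => attract j) (rA 0).1.
  have follow i : r (i + j) \in D -> own (r (i + j)) = q -> r (i + j).+1 = s (r (i + j)).
    by move=> riD Ho; rewrite rt // riD.
  have [_ win] := pos_dominion_play (r := fun i => r (i + j)) Hd (fun i => rX (i + j)) rjD follow.
  exact: wins_shift win.
Qed.

Lemma pos_dominion_union q (X B D : {set V}) s1 s2 :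
  pos_dominion q X B s1 -> pos_dominion q (X :\: B) D s2 ->
  pos_dominion q X (B :|: D) (fun u => if u \in B then s1 u else s2 u).
Proof.
move=> HB HD; have [/subsetP BX B1 B2 _] := HB; have [/subsetP DY D1 D2 D3] := HD.
have DB u : u \in D -> (u \in B) = false by move=> /DY; rewrite inE => /andP[/negPf].
have BDX u : u \in B :|: D -> u \in X.
  by rewrite inE => /orP[/BX //|/DY]; rewrite inE => /andP[].
split.
- exact/subsetP.
- move=> u; rewrite inE => /orP[uB|uD] uq; rewrite ?uB ?DB //.
    by have [suB e] := B1 _ uB uq; rewrite inE suB.
  by have [suD e] := D1 _ uD uq; rewrite inE suD orbT.
- move=> u w; rewrite !inE => /orP[uB|uD] uo wX uw; first by rewrite (B2 _ _ uB uo wX uw).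
  case: (boolP (w \in B)) => //= wB; apply: D2 uD uo _ uw; by rewrite inE wB.
- move=> r rBD rt; have rX : path_in X r by move=> i; have [/BDX riX e] := rBD i.
  case: (classic (exists n, r n \in B)) => [[n rnB]|noB].
    (* once in B, the play stays in B *)
    have follow i : r (i + n) \in B -> own (r (i + n)) = q -> r (i + n).+1 = s1 (r (i + n)).
      by move=> riB Ho; rewrite rt // riB.
    have [_ win] := pos_dominion_play (r := fun i => r (i + n)) HB (fun i => rX (i + n)) rnB follow.
    exact: wins_shift win.
  have rB i : (r i \in B) = false by apply/negP => riB; apply: noB; exists i.
  apply: D3 => [i|i Ho]; last by rewrite rt // rB.
  have [] := rBD i; rewrite inE rB /= => riD e; split => //.
Qed.

(* Zielonka's first case: if p := player_of_parity k, k the top priority,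
   wins everywhere outside the attractor A of the top vertices, then p wins
   everywhere (paths either visit A infinitely often, hence see the top
   priority infinitely often, or eventually remain outside A). *)
Lemma top_attractor_dominion k (X : {set V}) s : subgame E X ->
  (forall u, u \in X -> pi u <= k) ->
  pos_dominion (player_of_parity k)
    (X :\: attractor (player_of_parity k) (top_prio pi X k) X)
    (X :\: attractor (player_of_parity k) (top_prio pi X k) X) s ->
  pos_dominion (player_of_parity k) X X (fun u =>
    if u \in attractor (player_of_parity k) (top_prio pi X k) X
    then attr_move (player_of_parity k) (top_prio pi X k) X u else s u).
Proof.
set p := player_of_parity k; set S := top_prio pi X k; set A := attractor p S X.
move=> HX Xk HY; have [_ Y1 _ Y3] := HY.
split => //.
- move=> u uX up; case: ifP => uA; first exact: attr_moveP.
  have [suY e] : s u \in X :\: A /\ E u (s u) by apply: Y1; rewrite // inE uA.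
  by move: suY; rewrite inE => /andP[].
- move=> r rX rt; case: (often_or_finally_never (fun m => r m \in A)) => [often|[n never]].
    apply: wins_top => [i|n]; first by apply: Xk; case: (rX i).
    have [m [nm rmA]] := often n.
    have attract j : r j \in A -> own (r j) = p -> r j.+1 = attr_move p S X (r j).
      by move=> rjA Ho; rewrite rt // rjA.
    have [j [mj rjS]] := attractor_reach rX (fun j rjA _ => attract j rjA) rmA.
    exists j; split; first exact: leq_trans nm mj.
    by move: rjS; rewrite inE => /andP[_ /eqP].
  have rA i : r (i + n) \in A = false by apply/negP; apply: never; apply: leq_addl.
  apply: (@wins_shift _ _ n); apply: Y3 => [i|i Ho]; last by rewrite /= addSn rt // rA.
  by have [riX e] := rX (i + n); rewrite inE rA riX.
Qed.

Definition pos_split (X : {set V}) := forall p, exists W s1 s2,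
  pos_dominion p X W s1 /\ pos_dominion (opp p) X (X :\: W) s2.

Lemma pos_split_swap (X W : {set V}) p s1 s2 :
  pos_dominion p X W s1 -> pos_dominion (opp p) X (X :\: W) s2 -> pos_split X.
Proof.
move=> H1 H2 q; case: (player_cases q p) => ->; first by exists W, s1, s2.
exists (X :\: W), s2, s1; split=> //; rewrite oppK.
have [WX _ _ _] := H1; by rewrite setDDr setDv set0U (setIidPr WX).
Qed.

Lemma prio_attr_top d p (G : {set V}) : (forall v, v \in G -> pi v <= d.+1) ->
  forall v, v \in G :\: attractor p (top_prio pi G d.+1) G -> pi v <= d.
Proof.
move=> Gd v; rewrite inE => /andP[vA vG]; have := Gd _ vG.
rewrite leq_eqVlt ltnS => /orP[/eqP vd|//].
by move: vA; rewrite attractor_base // inE vG vd eqxx.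
Qed.

Lemma prio_sub (G G' : {set V}) d : G' \subset G -> (forall v, v \in G -> pi v <= d) ->
  forall v, v \in G' -> pi v <= d.
Proof. by move=> /subsetP G'G Gd v /G'G; apply: Gd. Qed.

Lemma card_attr_compl p (S X : {set V}) x : x \in X -> x \in S ->
  #|X :\: attractor p S X| < #|X|.
Proof.
move=> xX xS; apply: proper_card; apply/properP; split; first exact: subsetDl.
by exists x; rewrite // inE attractor_base.
Qed.

Hypothesis Hpos : forall v, 0 < pi v.

Lemma prio0_empty (G : {set V}) : (forall v, v \in G -> pi v <= 0) -> G = set0.
Proof. by move=> G0; apply/setP => u; rewrite inE; apply/negP => /G0; rewrite leqNgt Hpos. Qed.

(* Positional determinacy (Zielonka's recursion), by induction on the top
   priority k and then on the size of the arena.  Let p be the player of k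
   and Y the complement of the attractor of the top vertices.  If p wins all
   of Y, p wins all of X.  Otherwise the opponent wins a nonempty part Yq of
   Y, hence its attractor B in X; the rest X \ B is split by induction. *)
Lemma positional_determinacy k (X : {set V}) : subgame E X ->
  (forall u, u \in X -> pi u <= k) -> pos_split X.
Proof.
elim: k X => [|k IHk] X HX Xk.
  rewrite (prio0_empty Xk).
  by apply: (pos_split_swap (W := set0) (p := Even) (s1 := id) (s2 := id));
    rewrite ?setD0; apply: pos_dominion0.
have [n] := ubnP #|X|; elim: n => // n IHn in X HX Xk *; rewrite ltnS => Xn.
set p := player_of_parity k.+1; set A := attractor p (top_prio pi X k.+1) X.
have HY : subgame E (X :\: A) by apply: attr_compl_subgame.
have [Yp [sYp [sYq [HYp HYq]]]] := IHk _ HY (prio_attr_top Xk) p.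
have [YpY _ _ _] := HYp.
case: (set_0Vmem ((X :\: A) :\: Yp)) => [Yq0 | [x xYq]].
  have Yp_eq : Yp = X :\: A by apply/eqP; rewrite eqEsubset YpY -setD_eq0 Yq0 eqxx.
  rewrite Yp_eq in HYp.
  apply: (pos_split_swap (top_attractor_dominion HX Xk HYp) (s2 := id)).
  by rewrite setDv; apply: pos_dominion0.
have YX : X :\: A \subset X by apply: subsetDl.
have HYqX : pos_dominion (opp p) X ((X :\: A) :\: Yp) sYq.
  apply: pos_dominion_lift HYq YX _ => u uY; rewrite oppK => up w wX uw.
  exact: attr_compl_trap uY up wX uw.
set B := attractor (opp p) ((X :\: A) :\: Yp) X.
have HB := pos_dominion_attr HX HYqX; rewrite -/B in HB.
have HZ : subgame E (X :\: B) by apply: attr_compl_subgame.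
have Zn : #|X :\: B| < n.
  have xX : x \in X by apply: (subsetP YX); apply: (subsetP (subsetDl _ Yp)).
  exact: leq_trans (card_attr_compl _ xX xYq) Xn.
have [Zp [sZp [sZq [HZp HZq]]]] := IHn _ HZ (prio_sub (subsetDl _ _) Xk) Zn p.
apply: (pos_split_swap (W := Zp) (p := p)).
  apply: pos_dominion_lift HZp (subsetDl _ _) _ => u uZ uo w wX uw.
  exact: attr_compl_trap uZ uo wX uw.
have [ZpZ _ _ _] := HZp.
have -> : X :\: Zp = B :|: ((X :\: B) :\: Zp).
  apply/setP => u; rewrite !inE; case: (boolP (u \in B)) => //= uB.
  by rewrite (attractor_in uB) andbT; apply: contraTN uB => /(subsetP ZpZ); rewrite inE => /andP[].
exact: pos_dominion_union HB HZq.
Qed.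

Lemma dominion_closed p (G D : {set V}) : subgame E G -> dominion E VE pi p G D ->
  forall v w, v \in D -> own v = opp p -> w \in G -> E v w -> w \in D.
Proof.
move=> HG [DG HD] v w vD vo wG vw; have [s [Hs Hplays]] := HD v vD.
pose t (h : seq V) := if h == [:: v] then w else succ_in G (last v h).
have Ht : valid_strategy E VE (opp p) G t.
  move=> h y yG yo; rewrite /t; case: eqP => [h_eq|_]; last by rewrite last_rcons; apply: succ_inP.
  have : last v (rcons h y) = last v [:: v] by rewrite h_eq.
  by rewrite last_rcons /= => ->.
have [r [Hr Hc1 Hc2]] := play_exists Hs Ht (subsetP DG _ vD).
have [rD _] := Hplays r Hr Hc1; have [r0 _] := Hr.
have r0o : own (r 0) = opp p by rewrite r0.
suff <- : r 1 = w by [].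
by rewrite (Hc2 0 r0o) /t /mkseq /= r0 eqxx.
Qed.

(* From every vertex of a dominion some play starts, so it has a successor in D. *)
Lemma dominion_subgame p (G D : {set V}) : subgame E G -> dominion E VE pi p G D ->
  subgame E D.
Proof.
move=> HG [DG HD] v vD; have [s [Hs Hplays]] := HD v vD.
have Ht : valid_strategy E VE (opp p) G (positional v (succ_in G)).
  by apply: positional_valid => y yG _; apply: succ_inP.
have [r [Hr Hc1 _]] := play_exists Hs Ht (subsetP DG _ vD).
have [rD _] := Hplays r Hr Hc1; have [r0 rG] := Hr.
by exists (r 1); split => //; rewrite -r0; case: (rG 0).
Qed.

Lemma dominion_no_counter p (G D D' : {set V}) s x : subgame E G ->
  dominion E VE pi p G D -> pos_dominion (opp p) D D' s -> x \in D' -> False.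
Proof.
move=> HG [DG HD] Hd' xD'; have [D'D Hmove _ _] := Hd'.
have xD := subsetP D'D _ xD'; have [s1 [Hs1 Hplays]] := HD x xD.
have Ht : valid_strategy E VE (opp p) G (positional x (extend D' G s)).
  apply: positional_valid => y; apply: extendP => //; first exact: subset_trans D'D DG.
have [r [Hr Hc1 /positional_consistent Hc2]] := play_exists Hs1 Ht (subsetP DG _ xD).
have [rD win] := Hplays r Hr Hc1; have [r0 rG] := Hr.
have rD' : path_in D r by move=> i; split => //; case: (rG i).
have r0D' : r 0 \in D' by rewrite r0.
have follow i : r i \in D' -> own (r i) = opp p -> r i.+1 = s (r i).
  by move=> riD' Ho; rewrite Hc2 // /extend riD'.
have [_ win'] := pos_dominion_play Hd' rD' r0D' follow.
exact: wins_unique win win'.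
Qed.

(* Every dominion is a positional dominion: split it by positional determinacy;
   the opponent's part is empty by dominion_no_counter. *)
Lemma dominion_positional k p (G D : {set V}) : subgame E G ->
  (forall v, v \in G -> pi v <= k) -> dominion E VE pi p G D -> exists s, pos_dominion p G D s.
Proof.
move=> HG Gk Hdom; have [DG _] := Hdom.
have [W [s1 [s2 [H1 H2]]]] :=
  positional_determinacy (dominion_subgame HG Hdom) (prio_sub DG Gk) p.
have [WD _ _ _] := H1.
have W_eq : W = D.
  apply/eqP; rewrite eqEsubset WD -setD_eq0; apply/eqP.
  by case: (set_0Vmem (D :\: W)) => // -[x xDW]; case: (dominion_no_counter HG Hdom H2 xDW).
rewrite W_eq in H1; exists s1; apply: pos_dominion_lift H1 DG _.
by move=> u uD uo w wG uw; apply: dominion_closed HG Hdom u w uD uo wG uw.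
Qed.

(* Split D' := D \ Attr_me(N_k, D):
   if me won all of D', then me would win all of D (top_attractor_dominion),
   which is impossible; so the opponent wins a nonempty part of D', which
   avoids priority k, hence Attr_me(N_k, G) as well. *)
Lemma opp_dominion_survives k (G D : {set V}) s u : subgame E G ->
  (forall v, v \in G -> pi v <= k) ->
  pos_dominion (opp (player_of_parity k)) G D s -> u \in D ->
  exists (D2 : {set V}) (s2 : V -> V), [/\ D2 \subset D, D2 != set0 &
    pos_dominion (opp (player_of_parity k))
      (G :\: attractor (player_of_parity k) (top_prio pi G k) G) D2 s2].
Proof.
move=> HG Gk Hd uD; set me := player_of_parity k.
have [DG _ Dclosed _] := Hd.
have HD : subgame E D by move=> v vD; apply: pos_dominion_succ HG Hd vD.
have Dk := prio_sub DG Gk.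
set D' := D :\: attractor me (top_prio pi D k) D.
have D'D : D' \subset D by apply: subsetDl.
have HD' : subgame E D' by apply: attr_compl_subgame.
have [Wo [so [sm [HWo HWm]]]] := positional_determinacy HD' (prio_sub D'D Dk) (opp me).
rewrite oppK in HWm; have [WoD' _ _ _] := HWo.
case: (set_0Vmem Wo) => [Wo0 | [x xWo]].
  rewrite Wo0 setD0 in HWm.
  have := pos_dominion_disjoint HD (top_attractor_dominion HD Dk HWm)
    (pos_dominion_restrict Hd (subxx D) DG).
  by move=> dis; move: (disjointFr dis uD); rewrite uD.
exists Wo, so; split; first exact: subset_trans WoD' D'D.
  by apply/set0Pn; exists x.
(* me cannot leave D', so Wo is a dominion of the opponent in G *)
have HWoG : pos_dominion (opp me) G Wo so.
  apply: pos_dominion_lift HWo (subset_trans D'D DG) _ => y yD'; rewrite oppK => yme w wG yw.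
  have wD : w \in D by apply: Dclosed (subsetP D'D _ yD') _ wG yw; rewrite oppK.
  exact: attr_compl_trap yD' yme wD yw.
have WoS : [disjoint Wo & top_prio pi G k].
  apply: disjoint_intro => y /(subsetP WoD'); rewrite !inE => /andP[yA yD] /andP[_ yk].
  by move/negP: yA; apply; apply: attractor_base; rewrite // inE yD yk.
have := pos_dominion_avoids_attr HG HWoG WoS; rewrite oppK => WoA.
have [WoG _ _ _] := HWoG.
apply: pos_dominion_restrict HWoG _ (subsetDl _ _); apply/subsetP => y yWo.
by rewrite inE (disjointFr WoA yWo) (subsetP WoG).
Qed.

Definition solve_spec d (G : {set V}) pm po (R : {set V}) := [/\ R \subset G,
  (forall D s, pos_dominion (player_of_parity d) G D s -> #|D| <= pm -> D \subset R) &
  (forall D s, pos_dominion (opp (player_of_parity d)) G D s -> #|D| <= po ->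
     [disjoint D & R])].

Hypothesis Hnoloop : forall v, ~~ E v v.

Lemma pos_dominion_card p (X D : {set V}) s u : subgame E X -> pos_dominion p X D s ->
  u \in D -> 1 < #|D|.
Proof.
move=> HX Hd uD; have [w [wD uw]] := pos_dominion_succ HX Hd uD.
have uw' : u != w by apply/eqP => uw_eq; move: (Hnoloop u); rewrite {2}uw_eq uw.
have : [set u; w] \subset D by apply/subsetP => x; rewrite !inE => /orP[] /eqP ->.
by move/subset_leq_card; rewrite cards2 uw'.
Qed.

(* The base case: there is no nonempty dominion of size at most 1. *)
Lemma solve_spec_trivial d (G : {set V}) pm po : subgame E G -> (G = set0 \/ pm <= 1) ->
  solve_spec d G pm po set0.
Proof.
move=> HG Gpm; split; first exact: sub0set.
  move=> D s Hd Dpm; apply/subsetP => u uD; exfalso; case: Gpm => [G0|pm1].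
    by have [/subsetP DG _ _ _] := Hd; move: (DG _ uD); rewrite G0 inE.
  by have := pos_dominion_card HG Hd uD; rewrite ltnNge (leq_trans Dpm pm1).
by move=> D s _ _; apply: disjoint_intro => x _; rewrite inE.
Qed.

Lemma attr_removal_keeps_dominions me (G S W D : {set V}) s pm : subgame E G ->
  W \subset G :\: attractor me S G ->
  (forall D s, pos_dominion me (G :\: attractor me S G) D s -> #|D| <= pm ->
     [disjoint D & W]) ->
  pos_dominion me G D s -> #|D| <= pm -> D \subset G :\: attractor (opp me) W G.
Proof.
move=> HG WH Wavoids Hd Dpm; have [DG _ _ _] := Hd.
have HdH : pos_dominion me (G :\: attractor me S G) (D :&: (G :\: attractor me S G)) s.
  apply: pos_dominion_trap Hd (subsetDl _ _) _ => u uH up w wG uw.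
  exact: attr_compl_trap uH up wG uw.
have DHW := Wavoids _ _ HdH (leq_trans (subset_leq_card (subsetIl _ _)) Dpm).
have DW : [disjoint D & W].
  apply: disjoint_intro => x xD xW.
  have xDH : x \in D :&: (G :\: attractor me S G) by rewrite inE xD (subsetP WH).
  by move: (disjointFr DHW xDH); rewrite xW.
have DA := pos_dominion_avoids_attr HG Hd DW.
by apply/subsetP => u uD; rewrite inE (disjointFr DA uD) (subsetP DG).
Qed.

Lemma while_cases d W (G2 : {set V}) pm po R : whileR E VE pi d W G2 pm po R ->
  (W = set0 /\ R = G2) \/ exists Hf, repeatR E VE pi d G2 pm po R Hf.
Proof. by inversion 1; subst; [left | right; exists Hf]. Qed.

Section RepeatLoop.
Variable d : nat.
Hypothesis solve_correct_d : forall G pm po R, solveR E VE pi d G pm po R ->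
  subgame E G -> (forall v, v \in G -> pi v <= d) -> solve_spec d G pm po R.

Local Notation me := (player_of_parity d.+1).
Local Notation remove_top G := (G :\: attractor me (top_prio pi G d.+1) G).

Definition repeat_spec pm po (G Gf Hf : {set V}) := [/\ Gf \subset G /\ subgame E Gf,
  Hf = remove_top Gf,
  (forall u, u \in Gf -> own u = opp me -> forall w, w \in G -> E u w -> w \in Gf),
  (forall D s, pos_dominion me G D s -> #|D| <= pm -> D \subset Gf) &
  (forall D s, pos_dominion (opp me) Gf D s -> #|D| <= po %/ 2 -> D = set0)].

Lemma no_small_opp_dominion (G : {set V}) pm q : subgame E G ->
  (forall v, v \in G -> pi v <= d.+1) -> solve_spec d (remove_top G) q pm set0 ->
  forall D s, pos_dominion (opp me) G D s -> #|D| <= q -> D = set0.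
Proof.
move=> HG Gd [_ Wcontains _] D s Hd Dq; apply/eqP; apply: contraT => /set0Pn [u uD].
have [D2 [s2 [D2D D2n0 HD2]]] := opp_dominion_survives HG Gd Hd uD.
rewrite player_of_parityS in Wcontains.
have := Wcontains D2 s2 HD2 (leq_trans (subset_leq_card D2D) Dq).
by rewrite subset0 (negPf D2n0).
Qed.

(* The repeat loop establishes repeat_spec, by induction on its iterations:
   when W is empty the loop stops (no_small_opp_dominion); otherwise removing
   Attr_op(W) keeps the small dominions of me and the opponent's trap. *)
Lemma repeat_correct pm po (G Gf Hf : {set V}) : repeatR E VE pi d.+1 G pm po Gf Hf ->
  subgame E G -> (forall v, v \in G -> pi v <= d.+1) -> repeat_spec pm po G Gf Hf.
Proof.
move e : d.+1 => d' HR; elim: HR e => {d' G pm po Gf Hf}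
    [d' G pm po H W G' Hr1 HW Hr2 W0 | d' G pm po H W G' Gf Hf Hr1 HW Hr2 Wn0 _ IH]
    e HG Gd; subst d';
  have H_eq := remove_attrE HG Hr1; subst H;
  (have HH : subgame E (remove_top G) by apply: attr_compl_subgame);
  have Wspec := solve_correct_d HW HH (prio_attr_top Gd); have [WH _ Wavoids] := Wspec;
  have G'_eq := remove_attrE HG Hr2; subst G'.
  rewrite W0 attractor0 // setD0; split => //.
  - by move=> D s [DG].
  - by rewrite W0 in Wspec; apply: no_small_opp_dominion HG Gd Wspec.
have HG' : subgame E (G :\: attractor (opp me) W G) by apply: attr_compl_subgame.
have G'G : G :\: attractor (opp me) W G \subset G by apply: subsetDl.
have [[GfG' HGf] Hf_eq trapGf keepGf smallGf] := IH erefl HG' (prio_sub G'G Gd).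
split => //; first by split => //; apply: subset_trans GfG' G'G.
  move=> u uGf uo w wG uw.
  exact: trapGf u uGf uo w (attr_compl_trap (subsetP GfG' _ uGf) uo wG uw) uw.
move=> D s Hd Dpm; rewrite player_of_parityS oppK in Wavoids.
have DG' := attr_removal_keeps_dominions HG WH Wavoids Hd Dpm.
exact: keepGf (pos_dominion_restrict Hd DG' G'G) Dpm.
Qed.

(* An opponent dominion D of Gl with #|D| <= po (while the opponent has no
   nonempty dominion of size at most po/2 in Gl) contains a dominion D2 of
   remove_top Gl with #|D2| > po/2; the call with full bound po captures D2 in
   W, so W is nonempty and removing its attractor keeps at most po/2 vertices
   of D. *)
Lemma opp_dominion_halves pm po (Gl W D : {set V}) s : subgame E Gl ->
  (forall v, v \in Gl -> pi v <= d.+1) ->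
  (forall D s, pos_dominion (opp me) Gl D s -> #|D| <= po %/ 2 -> D = set0) ->
  solve_spec d (remove_top Gl) po pm W ->
  pos_dominion (opp me) Gl D s -> D != set0 -> #|D| <= po ->
  W != set0 /\ #|D :&: (Gl :\: attractor (opp me) W Gl)| <= po %/ 2.
Proof.
move=> HGl Gld small [_ Wcontains _] Hd /set0Pn[u uD] Dpo.
rewrite player_of_parityS in Wcontains.
have [D2 [s2 [D2D D2n0 HD2]]] := opp_dominion_survives HGl Gld Hd uD.
have D2W : D2 \subset W := Wcontains _ _ HD2 (leq_trans (subset_leq_card D2D) Dpo).
have D2big : po %/ 2 < #|D2|.
  rewrite ltnNge; apply: contra D2n0 => D2small; apply/eqP; apply: small D2small.
  apply: pos_dominion_lift HD2 (subsetDl _ _) _ => y yH; rewrite oppK => yme w wGl yw.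
  exact: attr_compl_trap yH yme wGl yw.
split; first by apply: contraNneq D2n0 => W0; rewrite -subset0 -W0.
have D2out : D :&: (Gl :\: attractor (opp me) W Gl) \subset D :\: D2.
  apply/subsetP => y; rewrite !inE => /andP[yD /andP[yA yGl]]; rewrite yD andbT.
  by apply: contraNN yA => yD2; apply: attractor_base yGl (subsetP D2W _ yD2).
apply: leq_trans (subset_leq_card D2out) _; rewrite cardsD (setIidPr D2D).
exact: half_bound Dpo D2big.
Qed.

Lemma while_correct pm po (W G2 R : {set V}) : subgame E G2 ->
  (forall v, v \in G2 -> pi v <= d.+1) -> whileR E VE pi d.+1 W G2 pm po R ->
  [/\ R \subset G2,
      forall D s, pos_dominion me G2 D s -> #|D| <= pm -> D \subset R &
      W != set0 -> forall D s, pos_dominion (opp me) G2 D s -> #|D| <= po %/ 2 ->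
        [disjoint D & R]].
Proof.
move=> HG2 G2d Hwhile; case: (while_cases Hwhile) => [[W0 ->]|[Hf HRf]].
  by split => //; [move=> D s [DG] | rewrite W0 eqxx].
have [[RG2 _] _ trapR keepR smallR] := repeat_correct HRf HG2 G2d.
split => // _ D s Hd Dpo; rewrite -setI_eq0; apply/eqP.
exact: smallR _ _ (pos_dominion_trap Hd RG2 trapR)
  (leq_trans (subset_leq_card (subsetIl _ _)) Dpo).
Qed.

Lemma solve_step_correct pm po (G Gl Hl W G2 R : {set V}) : subgame E G ->
  (forall v, v \in G -> pi v <= d.+1) ->
  repeatR E VE pi d.+1 G pm po Gl Hl -> solveR E VE pi d Hl po pm W ->
  remove_attr E VE (opp me) W Gl G2 -> whileR E VE pi d.+1 W G2 pm po R ->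
  solve_spec d.+1 G pm po R.
Proof.
move=> HG Gd HR HW Hrem Hwhile.
have [[GlG HGl] Hl_eq trapGl keepGl smallGl] := repeat_correct HR HG Gd; subst Hl.
have Gld := prio_sub GlG Gd.
have HHl : subgame E (remove_top Gl) by apply: attr_compl_subgame.
have Wspec := solve_correct_d HW HHl (prio_attr_top Gld); have [WHl _ Wavoids] := Wspec.
rewrite player_of_parityS oppK in Wavoids.
have G2_eq := remove_attrE HGl Hrem; subst G2.
have HG2 : subgame E (Gl :\: attractor (opp me) W Gl) by apply: attr_compl_subgame.
have G2Gl : Gl :\: attractor (opp me) W Gl \subset Gl by apply: subsetDl.
have [RG2 keepR avoidR] := while_correct HG2 (prio_sub G2Gl Gld) Hwhile.
have RGl := subset_trans RG2 G2Gl.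
split.
- exact: subset_trans RGl GlG.
- move=> D s Hd Dpm; have HdGl := pos_dominion_restrict Hd (keepGl _ _ Hd Dpm) GlG.
  have DG2 := attr_removal_keeps_dominions HGl WHl Wavoids HdGl Dpm.
  exact: keepR _ _ (pos_dominion_restrict HdGl DG2 G2Gl) Dpm.
- move=> D s Hd Dpo; apply: disjoint_setIl RGl _.
  have HdGl := pos_dominion_trap Hd GlG trapGl.
  case: (eqVneq (D :&: Gl) set0) => [-> | DGln0]; first by rewrite -setI_eq0 set0I.
  have [Wn0 small2] := opp_dominion_halves HGl Gld smallGl Wspec HdGl DGln0
    (leq_trans (subset_leq_card (subsetIl _ _)) Dpo).
  have HdG2 := pos_dominion_trap HdGl G2Gl
    (fun u uG2 uo w wGl uw => attr_compl_trap uG2 uo wGl uw).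
  exact: disjoint_setIl RG2 (avoidR Wn0 _ _ HdG2 small2).
Qed.

End RepeatLoop.

Lemma solve_correct d (G : {set V}) pm po R : solveR E VE pi d G pm po R ->
  subgame E G -> (forall v, v \in G -> pi v <= d) -> solve_spec d G pm po R.
Proof.
elim: d G pm po R => [|d IHd] G pm po R HS HG Gd.
  by inversion HS; subst; apply: solve_spec_trivial.
inversion HS as [? ? ? ? ? Htriv|? ? ? ? Gl Hl W G2 ? _ _ HR HW Hrem Hwhile]; subst.
  exact: solve_spec_trivial.
exact: (solve_step_correct IHd HG Gd HR HW Hrem Hwhile).
Qed.

(* Termination of the repeat loop: each iteration with W nonempty removes at
   least one vertex. *)
Lemma repeat_terminates d pm po :
  (forall H pm' po', subgame E H -> (forall v, v \in H -> pi v <= d) ->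
     exists W, solveR E VE pi d H pm' po' W) ->
  forall G, subgame E G -> (forall v, v \in G -> pi v <= d.+1) ->
  exists Gl Hl, repeatR E VE pi d.+1 G pm po Gl Hl.
Proof.
move=> solve_d G; have [n] := ubnP #|G|; elim: n G => // n IHn G; rewrite ltnS => Gn HG Gd.
set me := player_of_parity d.+1; set H := G :\: attractor me (top_prio pi G d.+1) G.
have HH : subgame E H by apply: attr_compl_subgame.
have [W HW] := solve_d H (po %/ 2) pm HH (prio_attr_top Gd).
have [WH _ _] := solve_correct HW HH (prio_attr_top Gd).
have Hr1 := remove_attr_compl me (top_prio pi G d.+1) HG.
have Hr2 := remove_attr_compl (opp me) W HG.
case: (set_0Vmem W) => [W0 | [x xW]].
  by exists (G :\: attractor (opp me) W G), H; apply: repeat_stop Hr1 HW Hr2 W0.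
have xG : x \in G by move: (subsetP WH _ xW); rewrite inE => /andP[].
have HG' : subgame E (G :\: attractor (opp me) W G) by apply: attr_compl_subgame.
have [Gl [Hl HR]] := IHn _ (leq_trans (card_attr_compl (opp me) xG xW) Gn)
  HG' (prio_sub (subsetDl _ _) Gd).
by exists Gl, Hl; apply: repeat_go Hr1 HW Hr2 _ HR; apply/set0Pn; exists x.
Qed.

Lemma solve_terminates d (G : {set V}) pm po : subgame E G ->
  (forall v, v \in G -> pi v <= d) -> exists R, solveR E VE pi d G pm po R.
Proof.
elim: d G pm po => [|d IHd] G pm po HG Gd.
  by exists set0; apply: solve_triv; left; apply: prio0_empty.
case: (boolP ((G == set0) || (pm <= 1))) => [triv|].
  by exists set0; apply: solve_triv; case/orP: triv => [/eqP|]; auto.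
rewrite negb_or -ltnNge => /andP[Gn0 pm1].
have [Gl [Hl HR]] := repeat_terminates pm po IHd HG Gd.
have [[GlG HGl] Hl_eq _ _ _] := repeat_correct (@solve_correct d) HR HG Gd; subst Hl.
have Gld := prio_sub GlG Gd.
have HHl : subgame E (Gl :\: attractor (player_of_parity d.+1) (top_prio pi Gl d.+1) Gl).
  by apply: attr_compl_subgame.
have [W HW] := IHd _ po pm HHl (prio_attr_top Gld).
set G2 := Gl :\: attractor (opp (player_of_parity d.+1)) W Gl.
have HG2 : subgame E G2 by apply: attr_compl_subgame.
have [R Hwhile] : exists R, whileR E VE pi d.+1 W G2 pm po R.
  case: (set_0Vmem W) => [W0|[x xW]]; first by exists G2; apply: while_stop.
  have [R [Hf HRf]] := repeat_terminates pm po IHd HG2 (prio_sub (subsetDl _ _) Gld).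
  by exists R; apply: while_go HRf; apply/set0Pn; exists x.
by exists R; apply: solve_step Gn0 pm1 HR HW (remove_attr_compl _ _ HGl) Hwhile.
Qed.

Lemma solve_sound d (G : {set V}) pm po R : subgame E G ->
  (forall v, v \in G -> pi v <= d) -> solveR E VE pi d G pm po R ->
  (forall D, dominion E VE pi (player_of_parity d) G D -> #|D| <= pm -> D \subset R) /\
  (forall D, dominion E VE pi (opp (player_of_parity d)) G D -> #|D| <= po ->
     [disjoint D & R]).
Proof.
move=> HG Gd HS; have [_ contains avoids] := solve_correct HS HG Gd.
split=> D HD Dbound; have [s Hs] := dominion_positional HG Gd HD.
  exact: contains Hs Dbound.
exact: avoids Hs Dbound.
Qed.

End ParityGameTheory.

Theorem lemma4p1 (V : finType) (E : rel V) (VE : {set V}) (pi : V -> nat)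
  (Hnoloop : forall v, ~~ E v v)
  (Hsucc : forall v, exists w, E v w)
  (Hpos : forall v, 0 < pi v)
  (G : {set V}) (HG : subgame E G)
  (pE pO d : nat) (HpE : 0 < pE) (HpO : 0 < pO)
  (Hd : forall v, v \in G -> pi v <= d) :
  (~~ odd d ->
     (exists R, solveR E VE pi d G pE pO R) /\
     forall R, solveR E VE pi d G pE pO R ->
       (forall D : {set V}, dominion E VE pi Even G D -> #|D| <= pE -> D \subset R) /\
       (forall D : {set V}, dominion E VE pi Odd G D -> #|D| <= pO -> [disjoint D & R])) /\
  (odd d ->
     (exists R, solveR E VE pi d G pO pE R) /\
     forall R, solveR E VE pi d G pO pE R ->
       (forall D : {set V}, dominion E VE pi Odd G D -> #|D| <= pO -> D \subset R) /\
       (forall D : {set V}, dominion E VE pi Even G D -> #|D| <= pE -> [disjoint D & R])).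
Proof.
split=> [even_d | odd_d]; (split; first exact: solve_terminates);
  move=> R HS; have := solve_sound Hpos Hnoloop HG Hd HS;
  by rewrite /player_of_parity ?(negPf even_d) ?odd_d.
Qed.
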